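(* Assume $A$ is finite, each $f_a$ is differentiable on $(0,1]$ with $f_a'>0$, $\phi_a=1/f_a'$. Let $\mathcal D_0\subseteq\mathcal D$ be open, $\theta\in\mathcal D_0$, and assume $\alpha$ and each $p_{\cdot,a}$ are differentiable at $\theta$ with $\sum_a\partial p_{\theta,a}/\partial\theta_j=0$, and that $g_{i,j}(\theta)$ exists. Then for all $i,j$, $$I_{i,j}(\theta)=z(\theta)\,g_{i,j}(\theta)=z(\theta)^2\,\sigma_{i,j}(\theta).$$
   Context: Let $A$ be a finite set, $\mathcal M_1^+(A)$ the probability distributions on $A$. For each $a$, $h_a:[0,1]\to\mathbb R$ is continuous, strictly concave, $h_a(0)=h_a(1)=0$, differentiable on $(0,1)$ with $h_a'=-f_a$; $I(p)=\sum_ah_a(p_a)$. $H_1,\dots,H_n:A\to\mathbb R$, $\langle p,X\rangle=\sum_ap_aX(a)$. $p^*$ satisfies the variational principle with parameters $\theta\in\mathbb R^n$ if $+\infty>I(p^* )-\sum_j\theta_j\langle p^*,H_j\rangle\ge I(p)-\sum_j\theta_j\langle p,H_j\rangle$ for all $p$. $\mathcal D$ is the set of $\theta$ for which such $p^*$ exists; it is unique, denoted $p_\theta$, and there is $\alpha(\theta)\in\mathbb R$ with $f_a(p_{\theta,a})=-\alpha(\theta)-\sum_j\theta_jH_j(a)$ whenever $p_{\theta,a}>0$. Massieu function: $\Phi(\theta)=I(p_\theta)-\sum_j\theta_j\langle p_\theta,H_j\rangle$; metric tensor $g_{i,j}(\theta)=\partial^2\Phi/\partial\theta_i\partial\theta_j$.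 Let $z(\theta)=\sum_{a:p_{\theta,a}>0}\phi_a(p_{\theta,a})$ and escort distribution $P_{\theta,a}=\phi_a(p_{\theta,a})/z(\theta)$ if $p_{\theta,a}>0$, $P_{\theta,a}=0$ otherwise. Score variables $X_{i,a}(\theta)=\frac1{P_{\theta,a}}\frac{\partial}{\partial\theta_i}p_{\theta,a}$ (for $P_{\theta,a}>0$); generalised Fisher information $I_{i,j}(\theta)=\sum_{a:P_{\theta,a}>0}P_{\theta,a}X_{i,a}(\theta)X_{j,a}(\theta)$; covariance $\sigma_{i,j}(\theta)=\langle P_\theta,H_iH_j\rangle-\langle P_\theta,H_i\rangle\langle P_\theta,H_j\rangle$. *)

From Stdlib Require Import Reals Lra Lia.
Open Scope R_scope.

(* Finite index sets: A = {0,..,m-1}, parameters indexed by {0,..,n-1}.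
   Vectors in R^n are represented as functions nat -> R (only the
   coordinates < n are relevant). *)

Fixpoint sumR (k : nat) (f : nat -> R) : R :=
  match k with
  | O => 0
  | S k' => sumR k' f + f k'
  end.

Definition distr (m : nat) (p : nat -> R) : Prop :=
  (forall a, (a < m)%nat -> 0 <= p a) /\ sumR m p = 1.

Definition pair (m : nat) (p X : nat -> R) : R := sumR m (fun a => p a * X a).

Definition Ient (m : nat) (h : nat -> R -> R) (p : nat -> R) : R :=
  sumR m (fun a => h a (p a)).

Definition Gfun (m n : nat) (h : nat -> R -> R) (H : nat -> nat -> R)
  (theta : nat -> R) (p : nat -> R) : R :=
  Ient m h p - sumR n (fun j => theta j * pair m p (H j)).

Definition VP (m n : nat) (h : nat -> R -> R) (H : nat -> nat -> R)
  (theta : nat -> R) (q : nat -> R) : Prop :=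
  distr m q /\
  forall p, distr m p -> Gfun m n h H theta p <= Gfun m n h H theta q.

Definition inD (m n : nat) (h : nat -> R -> R) (H : nat -> nat -> R)
  (theta : nat -> R) : Prop := exists q, VP m n h H theta q.

Definition close (n : nat) (theta theta' : nat -> R) (d : R) : Prop :=
  forall j, (j < n)%nat -> Rabs (theta' j - theta j) < d.

Definition open_Rn (n : nat) (S : (nat -> R) -> Prop) : Prop :=
  forall theta, S theta -> exists d, 0 < d /\
    forall theta', close n theta theta' d -> S theta'.

Definition differentiable_at (n : nat) (F : (nat -> R) -> R) (theta : nat -> R)
  : Prop :=
  exists L : nat -> R, forall eps, 0 < eps -> exists d, 0 < d /\
    forall theta', close n theta theta' d ->
      Rabs (F theta' - F theta - sumR n (fun j => L j * (theta' j - theta j)))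
        <= eps * sumR n (fun j => Rabs (theta' j - theta j)).

Definition upd (theta : nat -> R) (j : nat) (t : R) : nat -> R :=
  fun k => if Nat.eqb k j then t else theta k.

Definition partial (F : (nat -> R) -> R) (theta : nat -> R) (j : nat) (l : R)
  : Prop := derivable_pt_lim (fun t => F (upd theta j t)) (theta j) l.

Definition second_partial (n : nat) (F : (nat -> R) -> R) (theta : nat -> R)
  (i j : nat) (g : R) : Prop :=
  exists d, 0 < d /\ exists G : (nat -> R) -> R,
    (forall theta', close n theta theta' d -> partial F theta' j (G theta')) /\
    partial G theta i g.

Definition deriv_within (D : R -> Prop) (f : R -> R) (x l : R) : Prop :=
  forall eps, 0 < eps -> exists d, 0 < d /\
    forall y, D y -> y <> x -> Rabs (y - x) < d ->
      Rabs ((f y - f x) / (y - x) - l) < eps.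

Definition strictly_concave_01 (f : R -> R) : Prop :=
  forall x y t, 0 <= x <= 1 -> 0 <= y <= 1 -> x <> y -> 0 < t < 1 ->
    f (t * x + (1 - t) * y) > t * f x + (1 - t) * f y.

Definition on_supp (x : R) (v : R) : R :=
  if Rlt_dec 0 x then v else 0.

Definition Massieu (m n : nat) (h : nat -> R -> R) (H : nat -> nat -> R)
  (p : (nat -> R) -> nat -> R) (theta : nat -> R) : R :=
  Gfun m n h H theta (p theta).

Definition zfun (m : nat) (phi : nat -> R -> R) (q : nat -> R) : R :=
  sumR m (fun a => on_supp (q a) (phi a (q a))).

Definition escort (m : nat) (phi : nat -> R -> R) (q : nat -> R) (a : nat) : R :=
  on_supp (q a) (phi a (q a) / zfun m phi q).

(* generalised Fisher information, given dp i a = d p_{theta,a} / d theta_i: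
   X_{i,a} = dp i a / P_a, I_{ij} = sum_{a : P_a > 0} P_a X_{i,a} X_{j,a} *)
Definition fisher (m : nat) (phi : nat -> R -> R) (q : nat -> R)
  (dp : nat -> nat -> R) (i j : nat) : R :=
  sumR m (fun a => let P := escort m phi q a in
    on_supp P (P * (dp i a / P) * (dp j a / P))).

Definition covar (m : nat) (phi : nat -> R -> R) (q : nat -> R)
  (H : nat -> nat -> R) (i j : nat) : R :=
  pair m (escort m phi q) (fun a => H i a * H j a)
  - pair m (escort m phi q) (H i) * pair m (escort m phi q) (H j).

Definition cont_within (D : R -> Prop) (f : R -> R) (x : R) : Prop :=
  forall eps, 0 < eps -> exists d, 0 < d /\
    forall y, D y -> Rabs (y - x) < d -> Rabs (f y - f x) < eps.

From Stdlib Require Import Reals Lra Lia FunctionalExtensionality.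
Open Scope R_scope.

(* Write w_a = phi_a(p_a) on the support of p = p_theta (and w_a = 0 off it),
   Z = sum_a w_a = z(theta), so that the escort distribution is P_a = w_a / Z.

   Analytic half.  (1) Envelope argument: Phi(theta') >= G(theta', p_theta),
   an affine function of theta' touching Phi at theta, hence
   dPhi/dtheta_j = - <p_theta, H_j> on D_0 and g_ij = - sum_a dp_{i,a} H_j(a).
   (2) Off the support dp_{k,a} = 0, since p_{.,a} >= 0 attains a minimum.
   (3) On the support, differentiating f_a(p_a) = - alpha - sum_j theta_j H_j(a)
   along theta_k gives f_a'(p_a) dp_{k,a} = c_k - H_k(a) with c_k independent
   of a; together: dp_{k,a} = w_a (c_k - H_k(a)) for every a ("score form").

   Algebraic half.  From the score form and sum_a dp_{k,a} = 0 one gets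
   c_k = <P, H_k>, I_ij = Z g_ij and Z g_ij = Z^2 sigma_ij by direct summation. *)

Lemma sumR_ext m f g : (forall a, (a < m)%nat -> f a = g a) -> sumR m f = sumR m g.
Proof.
  induction m as [|m IH]; simpl; intros Hfg; [reflexivity|].
  rewrite IH by (intros; apply Hfg; lia). rewrite Hfg by lia. reflexivity.
Qed.

Lemma sumR_lin2 m c d u v :
  sumR m (fun a => c * u a + d * v a) = c * sumR m u + d * sumR m v.
Proof. induction m as [|m IH]; simpl; [ring | rewrite IH; ring]. Qed.

Lemma sumR_scal m c u : sumR m (fun a => c * u a) = c * sumR m u.
Proof. induction m as [|m IH]; simpl; [ring | rewrite IH; ring]. Qed.

Lemma sumR_nonneg m q : (forall a, (a < m)%nat -> 0 <= q a) -> 0 <= sumR m q.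
Proof.
  induction m as [|m IH]; simpl; intros Hq; [lra|].
  assert (0 <= sumR m q) by (apply IH; intros; apply Hq; lia).
  assert (0 <= q m) by (apply Hq; lia). lra.
Qed.

Lemma sumR_le_term m q a :
  (forall b, (b < m)%nat -> 0 <= q b) -> (a < m)%nat -> q a <= sumR m q.
Proof.
  induction m as [|m IH]; intros Hq Ha; [lia|]; simpl.
  assert (0 <= sumR m q) by (apply sumR_nonneg; intros; apply Hq; lia).
  assert (0 <= q m) by (apply Hq; lia).
  destruct (Nat.eq_dec a m) as [->|Hne]; [lra|].
  assert (q a <= sumR m q) by (apply IH; [intros; apply Hq; lia | lia]). lra.
Qed.

Lemma sumR_nonzero_term m q : sumR m q <> 0 -> exists a, (a < m)%nat /\ q a <> 0.
Proof.
  induction m as [|m IH]; simpl; intros Hs; [lra|].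
  destruct (Req_dec (q m) 0) as [E|E].
  - destruct IH as [a [Ha Hq]]; [lra|]. exists a; split; [lia | exact Hq].
  - exists m; split; [lia | exact E].
Qed.

Lemma sumR_upd n th i t c : (i < n)%nat ->
  sumR n (fun k => upd th i t k * c k) = sumR n (fun k => th k * c k) + (t - th i) * c i.
Proof.
  induction n as [|n IH]; intros Hi; [lia|]; simpl.
  destruct (Nat.eq_dec i n) as [->|Hne].
  - rewrite (sumR_ext n (fun k => upd th n t k * c k) (fun k => th k * c k)).
    + unfold upd. rewrite Nat.eqb_refl. ring.
    + intros a Ha. unfold upd. destruct (Nat.eqb_spec a n); [lia | reflexivity].
  - rewrite IH by lia. unfold upd at 1. destruct (Nat.eqb_spec n i); [lia|]. ring.
Qed.

Lemma distr_le_1 m q a : distr m q -> (a < m)%nat -> q a <= 1.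
Proof. intros [Hnn Hs] Ha. rewrite <- Hs. apply sumR_le_term; assumption. Qed.

Lemma distr_support m q : distr m q -> exists a, (a < m)%nat /\ 0 < q a.
Proof.
  intros [Hnn Hs]. destruct (sumR_nonzero_term m q) as [a [Ha Hqa]]; [lra|].
  exists a; split; [exact Ha|]. specialize (Hnn a Ha). lra.
Qed.

Lemma upd_same th j : upd th j (th j) = th.
Proof.
  apply functional_extensionality; intro k; unfold upd.
  destruct (Nat.eqb_spec k j); subst; reflexivity.
Qed.

Lemma close_upd n th i t d : 0 < d -> Rabs (t - th i) < d -> close n th (upd th i t) d.
Proof.
  intros Hd Ht k Hk. unfold upd. destruct (Nat.eqb_spec k i); subst; [exact Ht|].
  rewrite Rminus_diag, Rabs_R0; exact Hd.
Qed.

Lemma derivable_pt_lim_local f g x l : derivable_pt_lim f x l ->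
  (exists d, 0 < d /\ forall y, Rabs (y - x) < d -> f y = g y) ->
  derivable_pt_lim g x l.
Proof.
  intros Hf [d [Hd E]] eps Heps. destruct (Hf eps Heps) as [dl Hdl].
  assert (Hm : 0 < Rmin dl d) by (apply Rmin_glb_lt; [apply cond_pos | exact Hd]).
  exists (mkposreal _ Hm). intros k Hk0 Hk. simpl in Hk.
  rewrite <- (E (x + k)), <- (E x).
  - apply Hdl; [exact Hk0 | apply Rlt_le_trans with (1 := Hk), Rmin_l].
  - rewrite Rminus_diag, Rabs_R0; exact Hd.
  - replace (x + k - x) with k by ring. apply Rlt_le_trans with (1 := Hk), Rmin_r.
Qed.

Lemma tangent_minorant_slope f x l c d : derivable_pt_lim f x l -> 0 < d ->
  (forall y, Rabs (y - x) < d -> f x + c * (y - x) <= f y) -> l = c.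
Proof.
  intros Hf Hd Hmin.
  set (e := fun y => f y - c * (y - x)).
  assert (He : derivable_pt_lim e x (l - c * 1)).
  { apply (derivable_pt_lim_minus f (fun y => c * (y - x))); [exact Hf|].
    apply (derivable_pt_lim_scal (fun y => y - x)).
    replace 1 with (1 - 0) by ring.
    apply (derivable_pt_lim_minus id (fun _ => x)).
    - apply derivable_pt_lim_id.
    - apply derivable_pt_lim_const. }
  assert (Hmin0 : derive_pt e x (exist _ _ He) = 0).
  { apply (deriv_minimum e (x - d) (x + d)); [lra | lra |].
    intros y Hy1 Hy2. unfold e.
    assert (Hy : Rabs (y - x) < d) by (apply Rabs_def1; lra).
    specialize (Hmin y Hy). lra. }
  rewrite (derive_pt_eq_0 _ _ _ _ He) in Hmin0. lra.
Qed.

Lemma positive_near u t0 l : derivable_pt_lim u t0 l -> 0 < u t0 ->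
  exists d, 0 < d /\ forall t, Rabs (t - t0) < d -> 0 < u t.
Proof.
  intros Hu Hpos.
  destruct (derivable_continuous_pt u t0 (exist _ l Hu) (u t0) Hpos) as [d [Hd Hnear]].
  exists d; split; [exact Hd|]. intros t Ht.
  destruct (Req_dec t t0) as [->|Hne]; [exact Hpos|].
  assert (Hc : Rabs (u t - u t0) < u t0).
  { apply (Hnear t). split; [split; [exact I | auto] | exact Ht]. }
  apply Rabs_def2 in Hc. lra.
Qed.

Lemma derivable_pt_lim_sum m (F : nat -> R -> R) (L : nat -> R) x :
  (forall a, (a < m)%nat -> derivable_pt_lim (F a) x (L a)) ->
  derivable_pt_lim (fun t => sumR m (fun a => F a t)) x (sumR m L).
Proof.
  induction m as [|m IH]; intros HF; simpl; [apply derivable_pt_lim_const|].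
  apply (derivable_pt_lim_plus (fun t => sumR m (fun a => F a t)) (F m)).
  - apply IH; intros; apply HF; lia.
  - apply HF; lia.
Qed.

Lemma derivable_pt_lim_mulc f x l c : derivable_pt_lim f x l ->
  derivable_pt_lim (fun t => f t * c) x (l * c).
Proof.
  intros Hf. replace (l * c) with (l * c + f x * 0) by ring.
  apply (derivable_pt_lim_mult f (fun _ => c)); [exact Hf | apply derivable_pt_lim_const].
Qed.

Lemma derivable_pt_lim_affine S c b x : derivable_pt_lim (fun t => S + (t - c) * b) x b.
Proof.
  assert (Hlin : derivable_pt_lim (fun t => t - c) x (1 - 0)).
  { apply (derivable_pt_lim_minus id (fun _ => c));
      [apply derivable_pt_lim_id | apply derivable_pt_lim_const]. }
  assert (Hd := derivable_pt_lim_plus (fun _ => S) (fun t => (t - c) * b) x _ _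
                  (derivable_pt_lim_const S x) (derivable_pt_lim_mulc _ _ _ b Hlin)).
  replace (0 + (1 - 0) * b) with b in Hd by ring. exact Hd.
Qed.

(* Chain rule for an outer function only differentiable within (0,1],
   along an inner function that stays in (0,1] near t0.  The outer function
   is extended affinely outside (0,1] to apply the ordinary chain rule. *)
Lemma chain_rule_within (f u : R -> R) fl ul t0 :
  deriv_within (fun y => 0 < y <= 1) f (u t0) fl -> derivable_pt_lim u t0 ul ->
  (exists d, 0 < d /\ forall t, Rabs (t - t0) < d -> 0 < u t <= 1) ->
  derivable_pt_lim (fun t => f (u t)) t0 (fl * ul).
Proof.
  intros Hf Hu [d [Hd Hdom]].
  set (x := u t0).
  assert (Hx : 0 < x <= 1) by (apply Hdom; rewrite Rminus_diag, Rabs_R0; exact Hd).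
  set (F := fun y => if Rlt_dec 0 y then if Rle_dec y 1 then f y
                     else f x + fl * (y - x) else f x + fl * (y - x)).
  assert (FD : forall y, 0 < y <= 1 -> F y = f y).
  { intros y Hy; unfold F; destruct (Rlt_dec 0 y); [destruct (Rle_dec y 1)|]; lra. }
  assert (FN : forall y, ~ (0 < y <= 1) -> F y = f x + fl * (y - x)).
  { intros y Hy; unfold F; destruct (Rlt_dec 0 y); [destruct (Rle_dec y 1)|];
      [lra | reflexivity | reflexivity]. }
  assert (HF : derivable_pt_lim F x fl).
  { intros eps Heps. destruct (Hf eps Heps) as [dl [Hdl Hq]].
    exists (mkposreal _ Hdl). intros k Hk0 Hk. simpl in Hk. rewrite (FD x Hx).
    destruct (Rlt_dec 0 (x + k)) as [Hlo|Hlo]; [destruct (Rle_dec (x + k) 1) as [Hhi|Hhi]|].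
    - rewrite FD by lra.
      assert (Hk' : Rabs (x + k - x) < dl) by (replace (x + k - x) with k by ring; exact Hk).
      assert (Hxk : x + k <> x) by lra.
      specialize (Hq (x + k) (conj Hlo Hhi) Hxk Hk').
      fold x in Hq. replace (x + k - x) with k in Hq by ring. exact Hq.
    - rewrite FN by lra.
      replace ((f x + fl * (x + k - x) - f x) / k - fl) with 0 by (field; exact Hk0).
      rewrite Rabs_R0; exact Heps.
    - rewrite FN by lra.
      replace ((f x + fl * (x + k - x) - f x) / k - fl) with 0 by (field; exact Hk0).
      rewrite Rabs_R0; exact Heps. }
  apply derivable_pt_lim_local with (comp F u).
  - apply derivable_pt_lim_comp; [exact Hu | exact HF].
  - exists d; split; [exact Hd|]. intros y Hy. unfold comp. apply FD, Hdom, Hy.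
Qed.

Definition escort_weight (phi : nat -> R -> R) (q : nat -> R) (a : nat) : R :=
  on_supp (q a) (phi a (q a)).

Lemma escort_as_weight m phi q a :
  escort m phi q a = escort_weight phi q a / zfun m phi q.
Proof.
  unfold escort, escort_weight, on_supp.
  destruct (Rlt_dec 0 (q a)); [reflexivity | unfold Rdiv; ring].
Qed.

Lemma pair_escort m phi q X :
  pair m (escort m phi q) X =
  sumR m (fun a => escort_weight phi q a * X a) / zfun m phi q.
Proof.
  unfold pair, Rdiv. rewrite Rmult_comm, <- sumR_scal.
  apply sumR_ext; intros a Ha. rewrite escort_as_weight. unfold Rdiv; ring.
Qed.

Lemma centred_score m w u X c :
  (forall a, (a < m)%nat -> u a = w a * (c - X a)) -> sumR m u = 0 ->
  c * sumR m w = sumR m (fun a => w a * X a).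
Proof.
  intros Hu Hsum.
  rewrite (sumR_ext m u (fun a => c * w a + (-1) * (w a * X a))) in Hsum
    by (intros a Ha; rewrite Hu by exact Ha; ring).
  rewrite sumR_lin2 in Hsum. lra.
Qed.

Lemma fisher_summand Z w ci cj : 0 < Z -> 0 <= w ->
  on_supp (w / Z) (w / Z * (w * ci / (w / Z)) * (w * cj / (w / Z))) = Z * (w * ci) * cj.
Proof.
  intros HZ Hw. unfold on_supp. destruct (Rlt_dec 0 (w / Z)) as [HP|HP].
  - assert (Hwpos : 0 < w).
    { destruct Hw as [Hw|Hw]; [exact Hw|]. subst w. unfold Rdiv in HP. lra. }
    field; lra.
  - assert (Hw0 : w = 0).
    { destruct Hw as [Hw|Hw]; [|lra]. exfalso. apply HP, Rdiv_lt_0_compat; assumption. }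
    subst w. ring.
Qed.

Section ScoreIdentities.
Variables (m : nat) (phi : nat -> R -> R) (q : nat -> R) (H : nat -> nat -> R).
Variables (dp : nat -> nat -> R) (i j : nat) (ci cj g : R).
Local Notation w := (escort_weight phi q).
Local Notation Z := (zfun m phi q).
Hypothesis weight_nonneg : forall a, (a < m)%nat -> 0 <= w a.
Hypothesis Z_pos : 0 < Z.
Hypothesis score_i : forall a, (a < m)%nat -> dp i a = w a * (ci - H i a).
Hypothesis score_j : forall a, (a < m)%nat -> dp j a = w a * (cj - H j a).
Hypothesis mass_i : sumR m (dp i) = 0.
Hypothesis mass_j : sumR m (dp j) = 0.
Hypothesis g_eq : g = - sumR m (fun a => dp i a * H j a).

(* I_ij = Z sum_a dp_{i,a} (c_j - H_j(a)) = Z g, using sum_a dp_{i,a} = 0. *)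
Lemma fisher_eq_z_metric : fisher m phi q dp i j = Z * g.
Proof.
  unfold fisher.
  rewrite (sumR_ext m _ (fun a => (Z * cj) * dp i a + (- Z) * (dp i a * H j a))).
  - rewrite sumR_lin2, mass_i, g_eq. ring.
  - intros a Ha. cbv zeta. rewrite escort_as_weight, (score_i a Ha), (score_j a Ha).
    rewrite fisher_summand by auto. ring.
Qed.

Lemma z_metric_eq_covariance : Z * g = Z ^ 2 * covar m phi q H i j.
Proof.
  pose proof (centred_score m w _ (H i) ci score_i mass_i) as Mi.
  pose proof (centred_score m w _ (H j) cj score_j mass_j) as Mj.
  assert (Hg : g = - (ci * sumR m (fun a => w a * H j a)
                      - sumR m (fun a => w a * (H i a * H j a)))).
  { rewrite g_eq, (sumR_ext m _ (fun a => ci * (w a * H j a) + (-1) * (w a * (H i a * H j a)))).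
    - rewrite sumR_lin2. ring.
    - intros a Ha. rewrite score_i by exact Ha. ring. }
  change (sumR m w) with Z in Mi, Mj.
  unfold covar. rewrite !pair_escort, Hg, <- Mi, <- Mj. field. lra.
Qed.

End ScoreIdentities.

Section VariationalFamily.
Variables (m n : nat) (h : nat -> R -> R) (H : nat -> nat -> R).
Variables (p : (nat -> R) -> nat -> R) (D0 : (nat -> R) -> Prop).
Hypothesis p_maximises : forall th, inD m n h H th -> VP m n h H th (p th).
Hypothesis D0_in_D : forall th, D0 th -> inD m n h H th.
Hypothesis D0_open : open_Rn n D0.

Lemma distr_on_D0 th : D0 th -> distr m (p th).
Proof. intros Hth. exact (proj1 (p_maximises th (D0_in_D th Hth))). Qed.

Lemma D0_upd_near th : D0 th ->
  exists d, 0 < d /\ forall k t, Rabs (t - th k) < d -> D0 (upd th k t).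
Proof.
  intros Hth. destruct (D0_open th Hth) as [d [Hd Hop]].
  exists d; split; [exact Hd|]. intros k t Ht. apply Hop, close_upd; assumption.
Qed.

(* Envelope theorem: dPhi/dtheta_k = - <p_theta, H_k>, because
   theta' |-> G(theta', p_theta) is affine, below Phi and equal at theta. *)
Lemma massieu_partial th k l : D0 th -> (k < n)%nat ->
  partial (Massieu m n h H p) th k l -> l = - pair m (p th) (H k).
Proof.
  intros Hth Hk Hl. destruct (D0_upd_near th Hth) as [d [Hd Hnear]].
  apply (tangent_minorant_slope _ _ _ _ d Hl Hd). intros y Hy. cbv beta.
  rewrite upd_same.
  destruct (p_maximises _ (D0_in_D _ (Hnear k y Hy))) as [_ Hmax].
  specialize (Hmax (p th) (distr_on_D0 th Hth)).
  unfold Massieu. eapply Rle_trans; [|exact Hmax]. unfold Gfun.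
  assert (E := sumR_upd n th k y (fun j => pair m (p th) (H j)) Hk). cbv beta in E.
  rewrite E. right; ring.
Qed.

Lemma massieu_second_partial theta i j g dpi : D0 theta -> (i < n)%nat -> (j < n)%nat ->
  (forall a, (a < m)%nat -> partial (fun th => p th a) theta i (dpi a)) ->
  second_partial n (Massieu m n h H p) theta i j g ->
  g = - sumR m (fun a => dpi a * H j a).
Proof.
  intros Hth Hi Hj Hdp [d [Hd [G [HG HGi]]]].
  destruct (D0_upd_near theta Hth) as [d0 [Hd0 Hnear]].
  assert (Hder : derivable_pt_lim (fun t => - pair m (p (upd theta i t)) (H j))
                   (theta i) (- sumR m (fun a => dpi a * H j a))).
  { apply (derivable_pt_lim_opp (fun t => pair m (p (upd theta i t)) (H j))).
    apply (derivable_pt_lim_sum m (fun a t => p (upd theta i t) a * H j a)).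
    intros a Ha. apply derivable_pt_lim_mulc, Hdp, Ha. }
  apply (uniqueness_limite _ _ _ _ HGi), derivable_pt_lim_local with (1 := Hder).
  exists (Rmin d d0); split; [apply Rmin_glb_lt; assumption|]. intros y Hy.
  symmetry. apply (massieu_partial _ j); [apply Hnear | exact Hj | apply HG, close_upd].
  - apply Rlt_le_trans with (1 := Hy), Rmin_r.
  - exact Hd.
  - apply Rlt_le_trans with (1 := Hy), Rmin_l.
Qed.

(* Off the support, p_{.,a} >= 0 has a minimum at theta: its derivative is 0. *)
Lemma partial_off_support theta k a l : D0 theta -> (a < m)%nat ->
  partial (fun th => p th a) theta k l -> p theta a = 0 -> l = 0.
Proof.
  intros Hth Ha Hl Hzero. destruct (D0_upd_near theta Hth) as [d [Hd Hnear]].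
  apply (tangent_minorant_slope _ _ _ _ d Hl Hd). intros y Hy. cbv beta.
  rewrite upd_same, Hzero.
  destruct (distr_on_D0 _ (Hnear k y Hy)) as [Hnn _]. specialize (Hnn a Ha). lra.
Qed.

Variables (f f' : nat -> R -> R) (alpha : (nat -> R) -> R).
Hypothesis alpha_eq : forall th, inD m n h H th -> forall a, (a < m)%nat -> 0 < p th a ->
  f a (p th a) = - alpha th - sumR n (fun j => th j * H j a).
Hypothesis f_deriv : forall a, (a < m)%nat -> forall x, 0 < x <= 1 ->
  deriv_within (fun y => 0 < y <= 1) (f a) x (f' a x).
Hypothesis f'_pos : forall a, (a < m)%nat -> forall x, 0 < x <= 1 -> 0 < f' a x.

(* On the support, differentiating f_a(p_a) = - alpha - sum_j theta_j H_j(a)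
   along theta_k computes the partial derivative of alpha. *)
Lemma alpha_partial_on_support theta k a l : D0 theta -> (k < n)%nat -> (a < m)%nat ->
  partial (fun th => p th a) theta k l -> 0 < p theta a ->
  derivable_pt_lim (fun t => alpha (upd theta k t)) (theta k)
    (- (f' a (p theta a) * l) - H k a).
Proof.
  intros Hth Hk Ha Hl Hpos. unfold partial in Hl; cbv beta in Hl.
  destruct (D0_upd_near theta Hth) as [d0 [Hd0 Hnear]].
  destruct (positive_near _ _ _ Hl) as [d1 [Hd1 Hpos_near]]; [rewrite upd_same; exact Hpos|].
  assert (Hd : 0 < Rmin d0 d1) by (apply Rmin_glb_lt; assumption).
  assert (Hball : forall t, Rabs (t - theta k) < Rmin d0 d1 ->
                    D0 (upd theta k t) /\ 0 < p (upd theta k t) a).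
  { intros t Ht. split; [apply Hnear | apply Hpos_near];
      apply Rlt_le_trans with (1 := Ht); [apply Rmin_l | apply Rmin_r]. }
  assert (Hf : derivable_pt_lim (fun t => f a (p (upd theta k t) a)) (theta k)
                 (f' a (p theta a) * l)).
  { apply chain_rule_within; [| exact Hl |].
    - rewrite upd_same. apply f_deriv; [exact Ha|]. split; [exact Hpos|].
      apply (distr_le_1 m); [apply distr_on_D0 | ]; assumption.
    - exists (Rmin d0 d1); split; [exact Hd|]. intros t Ht.
      destruct (Hball t Ht) as [HD Hp]. split; [exact Hp|].
      apply (distr_le_1 m); [apply distr_on_D0 |]; assumption. }
  apply derivable_pt_lim_local with (fun t => - f a (p (upd theta k t) a)
      - (sumR n (fun j => theta j * H j a) + (t - theta k) * H k a)).
  - apply (derivable_pt_lim_minus (fun t => - f a (p (upd theta k t) a))).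
    + apply (derivable_pt_lim_opp (fun t => f a (p (upd theta k t) a))), Hf.
    + apply derivable_pt_lim_affine.
  - exists (Rmin d0 d1); split; [exact Hd|]. intros t Ht.
    destruct (Hball t Ht) as [HD Hp].
    pose proof (alpha_eq _ (D0_in_D _ HD) a Ha Hp) as E.
    assert (E2 := sumR_upd n theta k t (fun j => H j a) Hk). cbv beta in E2.
    rewrite E2 in E. lra.
Qed.

Local Notation phi := (fun b x => 1 / f' b x).

Lemma weight_pos_on_support theta a : D0 theta -> (a < m)%nat -> 0 < p theta a ->
  0 < escort_weight phi (p theta) a.
Proof.
  intros Hth Ha Hpos. unfold escort_weight, on_supp.
  destruct (Rlt_dec 0 (p theta a)) as [_|]; [|lra].
  apply Rdiv_lt_0_compat; [lra|]. apply f'_pos; [exact Ha|]. split; [exact Hpos|].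
  apply (distr_le_1 m); [apply distr_on_D0|]; assumption.
Qed.

Lemma weight_nonneg theta a : D0 theta -> (a < m)%nat ->
  0 <= escort_weight phi (p theta) a.
Proof.
  intros Hth Ha. destruct (Rlt_dec 0 (p theta a)) as [Hpos|Hpos].
  - left; apply weight_pos_on_support; assumption.
  - unfold escort_weight, on_supp. destruct (Rlt_dec 0 (p theta a)); [contradiction | lra].
Qed.

Lemma zfun_pos theta : D0 theta -> 0 < zfun m phi (p theta).
Proof.
  intros Hth. destruct (distr_support m _ (distr_on_D0 theta Hth)) as [a [Ha Hpos]].
  apply Rlt_le_trans with (escort_weight phi (p theta) a).
  - apply weight_pos_on_support; assumption.
  - apply sumR_le_term; [intros b Hb; apply weight_nonneg |]; assumption.
Qed.

(* Score form: dp_{k,a} = w_a (c_k - H_k(a)), where c_k = - dalpha/dtheta_k is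
   read off at any point a0 of the support. *)
Lemma score_form theta k dpk a0 : D0 theta -> (k < n)%nat ->
  (forall a, (a < m)%nat -> partial (fun th => p th a) theta k (dpk a)) ->
  (a0 < m)%nat -> 0 < p theta a0 ->
  forall a, (a < m)%nat ->
    dpk a = escort_weight phi (p theta) a * ((f' a0 (p theta a0) * dpk a0 + H k a0) - H k a).
Proof.
  intros Hth Hk Hdp Ha0 Hpa0 a Ha. unfold escort_weight, on_supp.
  destruct (Rlt_dec 0 (p theta a)) as [Hpa|Hpa].
  - pose proof (uniqueness_limite _ _ _ _
      (alpha_partial_on_support _ _ _ _ Hth Hk Ha (Hdp a Ha) Hpa)
      (alpha_partial_on_support _ _ _ _ Hth Hk Ha0 (Hdp a0 Ha0) Hpa0)) as E.
    assert (Hf' : 0 < f' a (p theta a)).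
    { apply f'_pos; [exact Ha|]. split; [exact Hpa|].
      apply (distr_le_1 m); [apply distr_on_D0|]; assumption. }
    replace (f' a0 (p theta a0) * dpk a0 + H k a0 - H k a) with (f' a (p theta a) * dpk a)
      by lra.
    field; lra.
  - assert (Hzero : p theta a = 0).
    { destruct (distr_on_D0 theta Hth) as [Hnn _]. specialize (Hnn a Ha). lra. }
    rewrite (partial_off_support theta k a (dpk a) Hth Ha (Hdp a Ha) Hzero). ring.
Qed.

End VariationalFamily.

Theorem mainTheorem10
  (m n : nat)                          (* |A| = m, A = {0..m-1}; n parameters *)
  (h f f' : nat -> R -> R)             (* h_a, f_a, f_a' *)
  (H : nat -> nat -> R)                (* H j a = H_j(a) *)
  (hcont : forall a, (a < m)%nat -> forall x, 0 <= x <= 1 -> cont_within (fun y => 0 <= y <= 1) (h a) x)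
  (hconc : forall a, (a < m)%nat -> strictly_concave_01 (h a))
  (h0 : forall a, (a < m)%nat -> h a 0 = 0)
  (h1 : forall a, (a < m)%nat -> h a 1 = 0)
  (hder : forall a, (a < m)%nat -> forall x, 0 < x < 1 ->
            derivable_pt_lim (h a) x (- f a x))
  (fder : forall a, (a < m)%nat -> forall x, 0 < x <= 1 ->
            deriv_within (fun y => 0 < y <= 1) (f a) x (f' a x))
  (fpos : forall a, (a < m)%nat -> forall x, 0 < x <= 1 -> 0 < f' a x)
  (p : (nat -> R) -> nat -> R)         (* theta |-> p_theta *)
  (hp : forall th, inD m n h H th -> VP m n h H th (p th))
  (alpha : (nat -> R) -> R)
  (halpha : forall th, inD m n h H th -> forall a, (a < m)%nat -> 0 < p th a ->
            f a (p th a) = - alpha th - sumR n (fun j => th j * H j a))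
  (D0 : (nat -> R) -> Prop)
  (hD0 : forall th, D0 th -> inD m n h H th)
  (hD0open : open_Rn n D0)
  (theta : nat -> R)
  (htheta : D0 theta)
  (halpha_diff : differentiable_at n alpha theta)
  (hp_diff : forall a, (a < m)%nat -> differentiable_at n (fun th => p th a) theta)
  (dp : nat -> nat -> R)               (* dp i a = d p_{theta,a} / d theta_i *)
  (hdp : forall i a, (i < n)%nat -> (a < m)%nat ->
           partial (fun th => p th a) theta i (dp i a))
  (hsum : forall j, (j < n)%nat -> sumR m (fun a => dp j a) = 0)
  (hg : forall i j, (i < n)%nat -> (j < n)%nat ->
          exists g, second_partial n (Massieu m n h H p) theta i j g) :
  let phi := fun a x => 1 / f' a x in
  forall i j g, (i < n)%nat -> (j < n)%nat ->
    second_partial n (Massieu m n h H p) theta i j g ->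
    fisher m phi (p theta) dp i j = zfun m phi (p theta) * g /\
    zfun m phi (p theta) * g =
      zfun m phi (p theta) ^ 2 * covar m phi (p theta) H i j.
Proof.
  intros phi i j g Hi Hj Hg.
  (* a point of the support, where the score constants c_k are read off *)
  destruct (distr_support m (p theta) (distr_on_D0 m n h H p D0 hp hD0 theta htheta))
    as [a0 [Ha0 Hpa0]].
  set (c := fun k => f' a0 (p theta a0) * dp k a0 + H k a0).
  assert (Hscore : forall k, (k < n)%nat -> forall a, (a < m)%nat ->
                     dp k a = escort_weight phi (p theta) a * (c k - H k a)).
  { intros k Hk. eapply score_form; eauto. }
  assert (Hw : forall a, (a < m)%nat -> 0 <= escort_weight phi (p theta) a).
  { intros a Ha. eapply weight_nonneg; eauto. }
  assert (HZ : 0 < zfun m phi (p theta)) by (eapply zfun_pos; eauto).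
  assert (Hgij : g = - sumR m (fun a => dp i a * H j a)).
  { apply (massieu_second_partial m n h H p D0 hp hD0 hD0open theta i j g (dp i)); auto. }
  split.
  - apply (fisher_eq_z_metric m phi (p theta) H dp i j (c i) (c j)); auto.
  - apply (z_metric_eq_covariance m phi (p theta) H dp i j (c i) (c j)); auto.
Qed.
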